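(* Let $\mathbf{U}$ be the $6\times 6$ matrix $$\mathbf{U}=\begin{pmatrix} 0 & -3 & 1 & -1 & -1 & -1 \\ 1 & 0 & -3 & -1 & -1 & -1 \\ -3 & 1 & 0 & -1 & -1 & -1 \\ -4 & -4 & 3 & 0 & -5 & 1 \\ -1 & -1 & -3 & 1 & 0 & -5 \\ -1 & -1 & -3 & -5 & 1 & 0 \end{pmatrix}$$ and consider the symmetric two-player game in which the row player's payoff matrix is $\mathbf{U}$ and the column player's payoff matrix is $\mathbf{U}^T$. This game has a unique Nash equilibrium (symmetric or not), namely $(\mathbf{n}_{123},\mathbf{n}_{123})$ with $\mathbf{n}_{123}=(1/3,1/3,1/3,0,0,0)$.
   Context: In the symmetric game, a mixed strategy is an element of the simplex $S_6=\{\mathbf{x}\in\mathbb{R}_+^6:\sum_i x_i=1\}$; when the row player plays $\mathbf{x}$ and the column player plays $\mathbf{y}$, the row player gets $\mathbf{x}\cdot\mathbf{U}\mathbf{y}$ and the column player gets $\mathbf{y}\cdot\mathbf{U}\mathbf{x}$. A Nash equilibrium is a pair $(\mathbf{x},\mathbf{y})$ of mixed strategies, each a best reply to the other. *)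

From mathcomp Require Import all_boot all_order all_algebra.
Set Implicit Arguments. Unset Strict Implicit. Unset Printing Implicit Defensive.
Import Order.TTheory GRing.Theory Num.Theory.
Local Open Scope ring_scope.

(* The 6x6 payoff matrix U (rows i, columns j, 0-indexed). *)
Definition Ulist : seq (seq int) :=
  [:: [:: 0; -3; 1; -1; -1; -1];
      [:: 1; 0; -3; -1; -1; -1];
      [:: -3; 1; 0; -1; -1; -1];
      [:: -4; -4; 3; 0; -5; 1];
      [:: -1; -1; -3; 1; 0; -5];
      [:: -1; -1; -3; -5; 1; 0]]%Z.

Definition Umx (R : realFieldType) : 'M[R]_6 :=
  \matrix_(i < 6, j < 6) ((nth [::] Ulist i)`_j)%:~R.

Definition mixed_strategy (R : realFieldType) (x : 'cV[R]_6) : Prop :=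
  (forall i, 0 <= x i 0) /\ \sum_(i < 6) x i 0 = 1.

Definition payoff (R : realFieldType) (A : 'M[R]_6) (x y : 'cV[R]_6) : R :=
  \sum_(i < 6) x i 0 * (A *m y) i 0.

(* Row player's payoff: x.Uy ; column player's payoff: y.Ux. *)
Definition is_Nash (R : realFieldType) (U : 'M[R]_6) (x y : 'cV[R]_6) : Prop :=
  mixed_strategy x /\ mixed_strategy y /\
  (forall x', mixed_strategy x' -> payoff U x' y <= payoff U x y) /\
  (forall y', mixed_strategy y' -> payoff U y' x <= payoff U y x).

Definition n123 (R : realFieldType) : 'cV[R]_6 :=
  \col_(i < 6) (if (i < 3)%N then 3^-1 else 0).

From mathcomp Require Import all_boot all_order all_algebra.
From mathcomp Require Import lra.
Set Implicit Arguments. Unset Strict Implicit. Unset Printing Implicit Defensive.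
Import Order.TTheory GRing.Theory Num.Theory.
Local Open Scope ring_scope.

(* A pure strategy played with positive probability in an equilibrium is a best
   reply to the opponent's strategy.  Short case analyses on which pure
   strategies are best replies then rule out strategy 5, then 4, then 3; as the
   game is symmetric, each such fact holds for both players.  What remains is
   rock-paper-scissors on {0,1,2} with gain 1 and loss 3.  There, if both players
   switch to the strategy beating the opponent's, they gain in total half a sum
   of squares, which vanishes only at the uniform strategies. *)

Lemma convex_comb_support (R : realFieldType) (I : finType) (x c : I -> R) :
  (forall i, 0 <= x i) -> \sum_i x i = 1 ->
  (forall k, c k <= \sum_i x i * c i) ->
  forall k, x k = 0 \/ c k = \sum_i x i * c i.
Proof.
move=> x_ge0 x_sum c_le k; set m := \sum_i x i * c i in c_le *.
have gap0 : \sum_i x i * (m - c i) = 0.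
  by rewrite (eq_bigr _ (fun i _ => mulrBr _ _ _)) sumrB -mulr_suml x_sum mul1r subrr.
have gap_ge0 i : true -> 0 <= x i * (m - c i) by rewrite mulr_ge0 ?subr_ge0.
move/eqP: (psumr_eq0P gap_ge0 gap0 (i := k) isT); rewrite mulf_eq0 subr_eq0.
by case/orP=> /eqP ->; [left | right].
Qed.

Section BestReplies.
Variable R : realFieldType.
Implicit Types (A : 'M[R]_6) (x y : 'cV[R]_6).

Lemma is_Nash_sym A x y : is_Nash A x y -> is_Nash A y x.
Proof. by case=> mx [my [bx by_]]. Qed.

Definition pure (k : 'I_6) : 'cV[R]_6 := \col_i (i == k)%:R.

Lemma mixed_pure k : mixed_strategy (pure k).
Proof.
split=> [i|]; first by rewrite mxE ler0n.
rewrite (bigD1 k) //= mxE eqxx big1 ?addr0 // => i /negbTE ne.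
by rewrite mxE ne.
Qed.

Lemma payoff_pure A k y : payoff A (pure k) y = (A *m y) k 0.
Proof.
rewrite /payoff (bigD1 k) //= mxE eqxx mul1r big1 ?addr0 // => i /negbTE ne.
by rewrite mxE ne mul0r.
Qed.

Lemma Nash_row_le A x y i : is_Nash A x y -> (A *m y) i 0 <= payoff A x y.
Proof. by case=> _ [_ [best _]]; rewrite -payoff_pure; apply/best/mixed_pure. Qed.

Lemma Nash_row_support A x y i :
  is_Nash A x y -> x i 0 = 0 \/ (A *m y) i 0 = payoff A x y.
Proof.
move=> NE; have [[x_ge0 x_sum] _] := NE.
apply: (@convex_comb_support _ _ (fun k => x k 0) (fun k => (A *m y) k 0) x_ge0 x_sum).
by move=> k; apply: Nash_row_le.
Qed.

End BestReplies.

Section Coordinates.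
Variable R : realFieldType.
Implicit Types (A : 'M[R]_6) (x y z : 'cV[R]_6).

(* Indices k >= 6 are read as 0, since [inord] is then [ord0]. *)
Definition cv z (k : nat) : R := z (inord k) 0.

Lemma sum_ord6 (F : 'I_6 -> R) : \sum_(i < 6) F i =
  F (inord 0) + F (inord 1) + F (inord 2) + F (inord 3) + F (inord 4) + F (inord 5).
Proof.
rewrite !big_ord_recr big_ord0 /= add0r.
by congr (_ + _ + _ + _ + _ + _); congr F; apply: val_inj; rewrite /= inordK.
Qed.

Lemma cv_inj y z : (forall k, (k < 6)%N -> cv y k = cv z k) -> y = z.
Proof.
move=> eq_yz; apply/matrixP => i j; rewrite !ord1.
by have := eq_yz i (ltn_ord i); rewrite /cv inord_val.
Qed.

Lemma mixed_cv z : mixed_strategy z ->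
  (forall k, 0 <= cv z k) /\ cv z 0 + cv z 1 + cv z 2 + cv z 3 + cv z 4 + cv z 5 = 1.
Proof. by case=> z_ge0; rewrite sum_ord6; split=> // k; apply: z_ge0. Qed.

Lemma cv_mixed z : (forall k, (k < 6)%N -> 0 <= cv z k) ->
  cv z 0 + cv z 1 + cv z 2 + cv z 3 + cv z 4 + cv z 5 = 1 -> mixed_strategy z.
Proof.
move=> z_ge0 z_sum; split; last by rewrite sum_ord6.
by move=> i; have := z_ge0 i (ltn_ord i); rewrite /cv inord_val.
Qed.

Lemma payoff_cv A x y : payoff A x y =
  cv x 0 * cv (A *m y) 0 + cv x 1 * cv (A *m y) 1 + cv x 2 * cv (A *m y) 2 +
  cv x 3 * cv (A *m y) 3 + cv x 4 * cv (A *m y) 4 + cv x 5 * cv (A *m y) 5.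
Proof. by rewrite /payoff sum_ord6. Qed.

Lemma Umx_mul_cv z :
  [/\ cv (Umx R *m z) 0 = - 3 * cv z 1 + cv z 2 - cv z 3 - cv z 4 - cv z 5,
      cv (Umx R *m z) 1 = cv z 0 - 3 * cv z 2 - cv z 3 - cv z 4 - cv z 5,
      cv (Umx R *m z) 2 = - 3 * cv z 0 + cv z 1 - cv z 3 - cv z 4 - cv z 5,
      cv (Umx R *m z) 3 = - 4 * cv z 0 - 4 * cv z 1 + 3 * cv z 2 - 5 * cv z 4 + cv z 5
    & [/\ cv (Umx R *m z) 4 = - cv z 0 - cv z 1 - 3 * cv z 2 + cv z 3 - 5 * cv z 5
        & cv (Umx R *m z) 5 = - cv z 0 - cv z 1 - 3 * cv z 2 - 5 * cv z 3 + cv z 4]].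
Proof.
rewrite /cv !mxE !sum_ord6 !mxE !inordK //=.
by split; [lra | lra | lra | lra | split; lra].
Qed.

End Coordinates.

Section Equilibrium.
Variables (R : realFieldType) (x y : 'cV[R]_6).
Hypothesis NE : is_Nash (Umx R) x y.

Local Notation c := (cv (Umx R *m y)).
Local Notation d := (cv (Umx R *m x)).
Local Notation v := (payoff (Umx R) x y).
Local Notation w := (payoff (Umx R) y x).

Let row_le k : c k <= v. Proof. exact: Nash_row_le. Qed.
Let col_le k : d k <= w. Proof. exact/Nash_row_le/is_Nash_sym. Qed.
Let row_support k : cv x k = 0 \/ c k = v. Proof. exact: Nash_row_support. Qed.
Let col_support k : cv y k = 0 \/ d k = w.
Proof. exact/Nash_row_support/is_Nash_sym. Qed.

Let x_ge0 k : 0 <= cv x k. Proof. exact: (mixed_cv (proj1 NE)).1. Qed.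
Let y_ge0 k : 0 <= cv y k. Proof. exact: (mixed_cv (proj1 (proj2 NE))).1. Qed.
Let x_sum : cv x 0 + cv x 1 + cv x 2 + cv x 3 + cv x 4 + cv x 5 = 1.
Proof. exact: (mixed_cv (proj1 NE)).2. Qed.
Let y_sum : cv y 0 + cv y 1 + cv y 2 + cv y 3 + cv y 4 + cv y 5 = 1.
Proof. exact: (mixed_cv (proj1 (proj2 NE))).2. Qed.

Local Ltac equilibrium_facts :=
  have [? ? ? ? [? ?]] := Umx_mul_cv y;
  have [? ? ? ? [? ?]] := Umx_mul_cv x;
  move: x_sum y_sum (x_ge0 0) (x_ge0 1) (x_ge0 2) (x_ge0 3) (x_ge0 4) (x_ge0 5)
        (y_ge0 0) (y_ge0 1) (y_ge0 2) (y_ge0 3) (y_ge0 4) (y_ge0 5)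
        (row_le 0) (row_le 1) (row_le 2) (row_le 3) (row_le 4) (row_le 5)
        (col_le 0) (col_le 1) (col_le 2) (col_le 3) (col_le 4) (col_le 5) => *.

Lemma Nash_unused5 : cv x 5 = 0.
Proof.
equilibrium_facts.
case: (row_support 5) => // r5.
case: (col_support 4) => [y4 | t4].
- case: (col_support 5) => [y5 | t5]; first lra.
  case: (row_support 4) => [x4 | r4]; last lra.
  case: (row_support 0) => [x0 | r0]; last lra.
  case: (row_support 1) => [x1 | r1]; first lra.
  by case: (col_support 0) => [y0 | t0]; lra.
- case: (row_support 3) => [x3 | r3]; first lra.
  case: (row_support 4) => [x4 | r4]; last lra.
  by case: (col_support 5) => [y5 | t5]; lra.
Qed.

Lemma Nash_unused4 : cv x 5 = 0 -> cv y 5 = 0 -> cv x 4 = 0.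
Proof.
move=> x5 y5; equilibrium_facts.
case: (row_support 4) => // r4.
case: (col_support 3) => [y3 | t3]; first lra.
case: (row_support 2) => [x2 | r2]; first lra.
by case: (col_support 1) => [y1 | t1]; lra.
Qed.

Lemma Nash_unused3 :
  cv x 4 = 0 -> cv x 5 = 0 -> cv y 4 = 0 -> cv y 5 = 0 -> cv x 3 = 0.
Proof.
move=> x4 x5 y4 y5; equilibrium_facts.
case: (row_support 3) => // r3.
case: (col_support 2) => [y2 | t2]; first lra.
by case: (row_support 1) => [x1 | r1]; lra.
Qed.

End Equilibrium.

Lemma sqr_sum4_le0 (R : realDomainType) (p q r t s : R) : 0 <= s ->
  p ^+ 2 + q ^+ 2 + r ^+ 2 + t ^+ 2 + s <= 0 -> [/\ p = 0, q = 0, r = 0 & t = 0].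
Proof.
move=> s_ge0 le0.
have sqr0 u : 0 <= u ^+ 2 -> u ^+ 2 <= 0 -> u = 0.
  by move=> ge0 le0'; apply/eqP; rewrite -sqrf_eq0 eq_le le0' ge0.
have := sqr_ge0 p; have := sqr_ge0 q; have := sqr_ge0 r; have := sqr_ge0 t.
by move=> *; split; apply: sqr0; lra.
Qed.

(* Rock-paper-scissors where strategy i+1 beats i (mod 3): the hypotheses say
   that neither player gains by switching to the strategy beating the opponent's. *)
Lemma bad_rps_equilibrium (R : realFieldType) (a0 a1 a2 e0 e1 e2 : R) :
  a0 + a1 + a2 = 1 -> e0 + e1 + e2 = 1 ->
  e2 * (- 3 * e1 + e2) + e0 * (e0 - 3 * e2) + e1 * (- 3 * e0 + e1) <=
    a0 * (- 3 * e1 + e2) + a1 * (e0 - 3 * e2) + a2 * (- 3 * e0 + e1) ->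
  a2 * (- 3 * a1 + a2) + a0 * (a0 - 3 * a2) + a1 * (- 3 * a0 + a1) <=
    e0 * (- 3 * a1 + a2) + e1 * (a0 - 3 * a2) + e2 * (- 3 * a0 + a1) ->
  [/\ a0 = 3^-1, a1 = 3^-1, a2 = 3^-1, e0 = 3^-1 & [/\ e1 = 3^-1 & e2 = 3^-1]].
Proof.
move=> a_sum e_sum a_best e_best.
have a2E : a2 = 1 - a0 - a1 by lra.
have e2E : e2 = 1 - e0 - e1 by lra.
subst a2 e2.
have [a01 a12 e01 e12] :
    [/\ a0 - a1 = 0, a1 - (1 - a0 - a1) = 0, e0 - e1 = 0 & e1 - (1 - e0 - e1) = 0].
  (* the two deviations gain, in total, half of this sum of squares *)
  apply: (@sqr_sum4_le0 _ _ _ _ _ (2 * ((a0 - e0) ^+ 2 + (a1 - e1) ^+ 2 +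
    (a0 + a1 - e0 - e1) ^+ 2) + (a0 - (1 - a0 - a1)) ^+ 2 + (e0 - (1 - e0 - e1)) ^+ 2)).
    by move: (sqr_ge0 (a0 - e0)) (sqr_ge0 (a1 - e1)) (sqr_ge0 (a0 + a1 - e0 - e1))
      (sqr_ge0 (a0 - (1 - a0 - a1))) (sqr_ge0 (e0 - (1 - e0 - e1))); lra.
  lra.
by split; [lra | lra | lra | lra | split; lra].
Qed.

Section RockPaperScissors.
Variable R : realFieldType.

(* The mixed strategy that beats z: it moves the weight z puts on i to i+1
   (mod 3), since row i+1 gets 1 against column i. *)
Definition beat (z : 'cV[R]_6) : 'cV[R]_6 :=
  \col_i cv z (nth 0%N [:: 2; 0; 1; 3; 4; 5] i).

Lemma beat_cv z :
  [/\ cv (beat z) 0 = cv z 2, cv (beat z) 1 = cv z 0, cv (beat z) 2 = cv z 1,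
      cv (beat z) 3 = cv z 3 & [/\ cv (beat z) 4 = cv z 4 & cv (beat z) 5 = cv z 5]].
Proof. by rewrite /cv !mxE !inordK. Qed.

Lemma mixed_beat z : mixed_strategy z -> mixed_strategy (beat z).
Proof.
case/mixed_cv=> z_ge0 z_sum; have [b0 b1 b2 b3 [b4 b5]] := beat_cv z.
apply: cv_mixed => [k _|]; last by rewrite b0 b1 b2 b3 b4 b5 -z_sum; lra.
by rewrite /cv mxE; apply: z_ge0.
Qed.

Lemma Nash_on_rps (x y : 'cV[R]_6) : is_Nash (Umx R) x y ->
  cv x 3 = 0 -> cv x 4 = 0 -> cv x 5 = 0 -> cv y 3 = 0 -> cv y 4 = 0 -> cv y 5 = 0 ->
  [/\ cv x 0 = 3^-1, cv x 1 = 3^-1, cv x 2 = 3^-1, cv y 0 = 3^-1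
    & [/\ cv y 1 = 3^-1 & cv y 2 = 3^-1]].
Proof.
case=> mx [my [x_best y_best]] x3 x4 x5 y3 y4 y5.
have := x_best _ (mixed_beat my); have := y_best _ (mixed_beat mx).
have [bx0 bx1 bx2 bx3 [bx4 bx5]] := beat_cv x.
have [by0 by1 by2 by3 [by4 by5]] := beat_cv y.
have [cx0 cx1 cx2 cx3 [cx4 cx5]] := Umx_mul_cv x.
have [cy0 cy1 cy2 cy3 [cy4 cy5]] := Umx_mul_cv y.
rewrite !payoff_cv bx0 bx1 bx2 bx3 bx4 bx5 by0 by1 by2 by3 by4 by5.
rewrite cx0 cx1 cx2 cx3 cx4 cx5 cy0 cy1 cy2 cy3 cy4 cy5 x3 x4 x5 y3 y4 y5 => gain_y gain_x.
have [_ sx] := mixed_cv mx; have [_ sy] := mixed_cv my.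
by apply: bad_rps_equilibrium; lra.
Qed.

End RockPaperScissors.

Section Uniform.
Variable R : realFieldType.

Lemma n123_cv : [/\ cv (n123 R) 0 = 3^-1, cv (n123 R) 1 = 3^-1, cv (n123 R) 2 = 3^-1,
  cv (n123 R) 3 = 0 & [/\ cv (n123 R) 4 = 0 & cv (n123 R) 5 = 0]].
Proof. by rewrite /cv !mxE !inordK. Qed.

Lemma eq_n123 z : cv z 0 = 3^-1 -> cv z 1 = 3^-1 -> cv z 2 = 3^-1 ->
  cv z 3 = 0 -> cv z 4 = 0 -> cv z 5 = 0 -> z = n123 R.
Proof.
have [n0 n1 n2 n3 [n4 n5]] := n123_cv => z0 z1 z2 z3 z4 z5.
by apply: cv_inj => -[|[|[|[|[|[|k]]]]]] // _; rewrite ?n0 ?n1 ?n2 ?n3 ?n4 ?n5.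
Qed.

Lemma n123_Nash : is_Nash (Umx R) (n123 R) (n123 R).
Proof.
have [n0 n1 n2 n3 [n4 n5]] := n123_cv.
have [c0 c1 c2 c3 [c4 c5]] := Umx_mul_cv (n123 R).
have mn : mixed_strategy (n123 R).
  by apply: cv_mixed => [[|[|[|[|[|[|k]]]]]] //|]; rewrite ?n0 ?n1 ?n2 ?n3 ?n4 ?n5; lra.
have best x : mixed_strategy x -> payoff (Umx R) x (n123 R) <= payoff (Umx R) (n123 R) (n123 R).
  case/mixed_cv=> x_ge0 x_sum; move: (x_ge0 3) (x_ge0 4) (x_ge0 5).
  rewrite !payoff_cv c0 c1 c2 c3 c4 c5 n0 n1 n2 n3 n4 n5; lra.
by split; [|split; [|split]].
Qed.

End Uniform.

Theorem proposition3 (R : realFieldType) :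
  is_Nash (Umx R) (n123 R) (n123 R) /\
  (forall x y : 'cV[R]_6, is_Nash (Umx R) x y -> x = n123 R /\ y = n123 R).
Proof.
split=> [|x y NE]; first exact: n123_Nash.
have NE' := is_Nash_sym NE.
have x5 := Nash_unused5 NE; have y5 := Nash_unused5 NE'.
have x4 := Nash_unused4 NE x5 y5; have y4 := Nash_unused4 NE' y5 x5.
have x3 := Nash_unused3 NE x4 x5 y4 y5; have y3 := Nash_unused3 NE' y4 y5 x4 x5.
have [x0 x1 x2 y0 [y1 y2]] := Nash_on_rps NE x3 x4 x5 y3 y4 y5.
by split; apply: eq_n123.
Qed.
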